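(* For every $\eta > 0$, every directed graph $\Gamma$ on $n$ vertices with minimum indegree $\delta^-(\Gamma) \geq \eta n$ admits a perfect $(\eta, 1 - \eta)$-weighted fractional matching. Furthermore, if $\eta = p/q$ for positive integers $p$ and $q$, then the weights of such a matching can be taken to be rational numbers with a common denominator bounded above by some function of $p$, $q$ and $n$.
   Context: Let $\Gamma$ be a directed graph on $n$ vertices and $\eta, \xi > 0$. An $(\eta,\xi)$-weighted fractional matching in $\Gamma$ is an assignment of a weight $w_{\vec{uv}} \ge 0$ to each directed edge $\vec{uv}$ of $\Gamma$ such that for every vertex $u$, $\sum_{v \in N^+_\Gamma(u)} \eta w_{\vec{uv}} + \sum_{v \in N^-_\Gamma(u)} \xi w_{\vec{vu}} \le 1$. Its total weight is $W := \sum_{\vec{uv} \in E(\Gamma)} (\eta+\xi) w_{\vec{uv}}$ (so $W \le n$), and it is perfect if $W = n$ (equivalently, equality holds at every vertex). *)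

From mathcomp Require Import all_boot all_order all_algebra.
From mathcomp Require Import reals.
Set Implicit Arguments. Unset Strict Implicit. Unset Printing Implicit Defensive.
Import Order.TTheory GRing.Theory Num.Theory.
Local Open Scope ring_scope.

(* A directed graph on the finite vertex type V is an edge relation
   e : rel V (e u v means the directed edge u -> v); it is a simple
   digraph: no loops (irreflexive), at most one edge u -> v for each
   ordered pair (antiparallel pairs allowed). *)

Definition indeg (V : finType) (e : rel V) (u : V) : nat := #|[set v | e v u]|.

(* (eta, xi)-weighted fractional matching: w u v is the weight of edge u->v
   (values of w on non-edges are irrelevant). *)
Definition weighted_fractional_matching (R : realFieldType) (V : finType)
    (e : rel V) (eta xi : R) (w : V -> V -> R) : Prop :=
  (forall u v, e u v -> 0 <= w u v) /\
  (forall u : V,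
     \sum_(v | e u v) eta * w u v + \sum_(v | e v u) xi * w v u <= 1).

Definition total_weight (R : realFieldType) (V : finType)
    (e : rel V) (eta xi : R) (w : V -> V -> R) : R :=
  \sum_(u : V) \sum_(v | e u v) (eta + xi) * w u v.

Definition perfect_weighted_fractional_matching (R : realFieldType)
    (V : finType) (e : rel V) (eta xi : R) (w : V -> V -> R) : Prop :=
  weighted_fractional_matching e eta xi w /\
  total_weight e eta xi w = (#|V|)%:R.

From mathcomp Require Import all_boot all_order all_algebra.
From mathcomp Require Import reals.
From mathcomp Require Import ring lra.
Set Implicit Arguments. Unset Strict Implicit. Unset Printing Implicit Defensive.
Import Order.TTheory GRing.Theory Num.Theory.
Local Open Scope ring_scope.

(* Perfect (eta, 1 - eta)-weighted fractional matchings are the nonnegative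
   solutions lam of the linear system
     sum_(u -> v) lam_uv (eta 1_u + (1 - eta) 1_v) = 1.
   By Farkas' lemma, proved by Fourier-Motzkin elimination, either a solution
   exists or some y has eta y_u + (1 - eta) y_v >= 0 on every edge u -> v and
   sum_x y_x < 0.  The latter is impossible: let v minimise y, with y_v < 0;
   each of the d >= eta n in-neighbours u of v has eta y_u >= -(1 - eta) y_v
   and every other vertex x has eta y_x >= eta y_v, so
   eta sum_x y_x >= y_v (eta n - d) >= 0.  Loops do no harm.
   Elimination over Q produces rational weights; since there are finitely
   many digraphs on n vertices, the largest of their common denominators
   bounds D in terms of p, q and n. *)

Section Farkas.
Variables (R : realFieldType) (I : finType) (J : eqType).
Implicit Types (a b u v y z : I -> R) (col : J -> I -> R) (lam : J -> R).
Implicit Types (s : seq J).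

Definition dot y a : R := \sum_i y i * a i.

Lemma dotC y a : dot y a = dot a y.
Proof. by apply: eq_bigr => i _; rewrite mulrC. Qed.

Lemma dotNl y a : dot (fun i => - y i) a = - dot y a.
Proof. by rewrite /dot -sumrN; apply: eq_bigr => i _; rewrite mulNr. Qed.

Lemma dot_subr y a b c d :
  dot y (fun i => c * a i - d * b i) = c * dot y a - d * dot y b.
Proof. by rewrite /dot !mulr_sumr -sumrB; apply: eq_bigr => i _; ring. Qed.

Lemma dot_subl y a b c d :
  dot (fun i => c * a i - d * b i) y = c * dot a y - d * dot b y.
Proof. by rewrite dotC dot_subr !(dotC y). Qed.

Lemma dot_self_gt0 a i : a i != 0 -> 0 < dot a a.
Proof.
move=> ai_neq0; rewrite /dot (bigD1 i) //= ltr_pwDl ?sumr_ge0 //.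
  by rewrite -expr2 exprn_even_gt0.
by move=> j _; rewrite -expr2 sqr_ge0.
Qed.

(* One Fourier-Motzkin step: the combination of [u] and [v] orthogonal to [y] *)
Definition project y u v : I -> R := fun i => dot y u * v i - dot y v * u i.

Lemma dot_project y z u v : dot z (project y u v) = dot (project u y z) v.
Proof. by rewrite dot_subr dot_subl !(dotC u) (dotC y v) (dotC z v); ring. Qed.

Lemma dot_project_id y z u : dot z (project y u u) = 0.
Proof. by rewrite dot_subr subrr. Qed.

Definition conic_comb col s lam b :=
  (forall j, 0 <= lam j) /\ forall i, b i = \sum_(j <- s) lam j * col j i.

Definition separates y col s b :=
  (forall j, j \in s -> 0 <= dot y (col j)) /\ dot y b < 0.

Lemma sum_eta_with_notin s lam j c (F : J -> R) : j \notin s ->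
  \sum_(k <- s) [eta lam with j |-> c] k * F k = \sum_(k <- s) lam k * F k.
Proof.
move=> j_notin_s; apply: eq_big_seq => k k_in_s /=.
by have /negbTE-> : k != j by apply: contraNneq j_notin_s => <-.
Qed.

Lemma conic_comb_cons col s lam b j : j \notin s -> conic_comb col s lam b ->
  conic_comb col (j :: s) [eta lam with j |-> 0] b.
Proof.
move=> j_notin_s [lam_ge0 b_comb].
split=> [k|i]; first by rewrite /=; case: ifP.
by rewrite big_cons /= eqxx mul0r add0r sum_eta_with_notin // b_comb.
Qed.

Lemma separates_cons y col s b j :
  0 <= dot y (col j) -> separates y col s b -> separates y col (j :: s) b.
Proof. by move=> yj [ys yb]; split=> // k; rewrite inE => /predU1P[->|/ys]. Qed.

Lemma separates_project y z col s b j :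
  separates z (fun k => project y (col j) (col k)) s (project y (col j) b) ->
  separates (project (col j) y z) col (j :: s) b.
Proof.
rewrite /separates dot_project => -[zs zb]; split=> // k.
rewrite inE -dot_project => /predU1P[->|/zs //]; by rewrite dot_project_id.
Qed.

Lemma conic_comb_project y col s lam b j : j \notin s ->
  dot y (col j) < 0 -> separates y col s b ->
  conic_comb (fun k => project y (col j) (col k)) s lam (project y (col j) b) ->
  conic_comb col (j :: s)
    [eta lam with j |->
      (dot y b - \sum_(k <- s) lam k * dot y (col k)) / dot y (col j)] b.
Proof.
move=> j_notin_s yj_lt0 [ys yb_lt0] [lam_ge0 b_comb].
set S := \sum_(k <- s) _; set mu := (_ / _).
have S_ge0 : 0 <= S.
  by rewrite /S big_seq; apply: sumr_ge0 => k k_in_s; rewrite mulr_ge0 ?ys.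
split=> [k|i].
  by rewrite /=; case: ifP => // _; rewrite /mu ler_ndivlMr // mul0r; lra.
rewrite big_cons /= eqxx sum_eta_with_notin //.
have := b_comb i; rewrite /project.
have -> :
  \sum_(k <- s) lam k * (dot y (col j) * col k i - dot y (col k) * col j i)
  = dot y (col j) * \sum_(k <- s) lam k * col k i - S * col j i.
  by rewrite mulr_sumr /S mulr_suml -sumrB; apply: eq_bigr => k _; ring.
have yj_neq0 : dot y (col j) != 0 by rewrite lt_eqF.
move=> comb_i; apply: (mulfI yj_neq0).
rewrite mulrDr mulrA [_ * mu]mulrC divfK //; move: comb_i; lra.
Qed.

Lemma farkas s col b : uniq s ->
  {lam | conic_comb col s lam b} + {y | separates y col s b}.
Proof.
elim: s col b => [|j s IH] col b /=.
  case: (pickP (fun i => b i != 0)) => [i bi_neq0|b0] _.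
    right; exists (fun i => - b i); split=> //.
    by rewrite dotNl oppr_lt0 (dot_self_gt0 bi_neq0).
  left; exists (fun=> 0); split=> // i.
  by rewrite big_nil; apply/eqP; rewrite -[_ == _]negbK b0.
case/andP=> j_notin_s s_uniq.
case: (IH col b s_uniq) => [[lam comb]|[y sep]].
  by left; eexists; apply: conic_comb_cons comb.
case: (leP 0 (dot y (col j))) => yj.
  by right; exists y; apply: separates_cons.
case: (IH (fun k => project y (col j) (col k)) (project y (col j) b) s_uniq)
  => [[lam comb]|[z sep']].
  by left; eexists; apply: conic_comb_project comb.
by right; eexists; apply: separates_project sep'.
Qed.

End Farkas.

Lemma sum_mul_delta (R : pzSemiRingType) (T : finType) (F : T -> R) (x : T) :
  \sum_u F u * (u == x)%:R = F x.
Proof.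
under eq_bigr => u _ do rewrite mulr_natr mulrb.
by rewrite -big_mkcond big_pred1_eq.
Qed.

Section FractionalMatching.
Variables (R : realFieldType) (V : finType) (e : rel V) (eta : R).
Hypothesis eta_gt0 : 0 < eta.
Hypothesis indeg_ge : forall u : V, eta * #|V|%:R <= (indeg e u)%:R.

Definition edges : seq (V * V) := enum [pred uv : V * V | e uv.1 uv.2].

Definition matching_col (uv : V * V) : V -> R :=
  fun x => eta * (x == uv.1)%:R + (1 - eta) * (x == uv.2)%:R.

Lemma dot_matching_col y uv :
  dot y (matching_col uv) = eta * y uv.1 + (1 - eta) * y uv.2.
Proof.
rewrite /dot /matching_col.
under eq_bigr => x _ do rewrite mulrDr mulrCA [y x * _]mulrCA.
by rewrite big_split /= -!mulr_sumr !sum_mul_delta.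
Qed.

Lemma sum_matching_col uv : \sum_x matching_col uv x = 1.
Proof.
have := dot_matching_col (fun=> 1) uv; rewrite /dot !mulr1 addrC subrK => <-.
by apply: eq_bigr => x _; rewrite mul1r.
Qed.

Lemma sum_edges (F : V * V -> R) :
  \sum_(uv <- edges) F uv = \sum_u \sum_(v | e u v) F (u, v).
Proof. by rewrite big_enum pair_big_dep; apply: eq_big => -[u v]. Qed.

Lemma load_edges (lam : V * V -> R) x :
  \sum_(uv <- edges) lam uv * matching_col uv x =
  \sum_(v | e x v) eta * lam (x, v) + \sum_(v | e v x) (1 - eta) * lam (v, x).
Proof.
under eq_bigr => uv _ do
  rewrite /matching_col mulrDr !(mulrCA (lam uv)) !mulrA !(eq_sym x).
rewrite big_split /= !sum_edges /=; congr (_ + _).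
  under eq_bigr => u _ do rewrite -mulr_suml.
  by rewrite sum_mul_delta.
rewrite [RHS]big_mkcond; apply: eq_bigr => u _.
rewrite big_mkcond -(sum_mul_delta (fun v => if e u v then _ else 0)) /=.
by apply: eq_bigr => v _; case: (e u v); rewrite ?mul0r.
Qed.

Lemma perfect_of_conic_comb lam :
  conic_comb matching_col edges lam (fun=> 1) ->
  perfect_weighted_fractional_matching e eta (1 - eta) (fun u v => lam (u, v)).
Proof.
move=> [lam_ge0 one_comb]; split; first split=> [u v _ //|u].
  by rewrite -load_edges -one_comb.
have -> : #|V|%:R = \sum_(x : V) (1 : R) by rewrite sumr_const.
under [RHS]eq_bigr => x _ do rewrite (one_comb x).
rewrite exchange_big /= sum_edges /total_weight; apply: eq_bigr => u _.
apply: eq_bigr => v _.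
by rewrite -mulr_sumr sum_matching_col addrC subrK mulr1 mul1r.
Qed.

Lemma indeg_sum v : (indeg e v)%:R = \sum_(x | e x v) (1 : R).
Proof. by rewrite sumr_const /indeg cardsE. Qed.

Lemma separating_sum_ge0 y :
  (forall u v, e u v -> 0 <= eta * y u + (1 - eta) * y v) -> 0 <= \sum_x y x.
Proof.
move=> y_edge.
case: (pickP (@predT V)) => [x0 _|V0]; last by rewrite big_pred0.
case: (arg_minP y (isT : predT x0)) => v _ v_min; set m := y v in v_min.
have [m_ge0|m_lt0] := leP 0 m.
  by apply: sumr_ge0 => x _; apply: le_trans m_ge0 (v_min x _).
suff : 0 <= eta * \sum_x y x by rewrite pmulr_rge0.
pose d : R := (indeg e v)%:R.
have in_bound : - (1 - eta) * m * d <= eta * \sum_(x | e x v) y x.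
  rewrite /d indeg_sum !mulr_sumr; apply: ler_sum => x exv.
  by have := y_edge x v exv; rewrite -/m mulr1; lra.
have out_count : #|V|%:R - d = \sum_(x | ~~ e x v) (1 : R).
  have -> : #|V|%:R = \sum_(x : V) (1 : R) by rewrite sumr_const.
  by rewrite /d indeg_sum (bigID (fun x => e x v)) /= addrC addrK.
have out_bound : eta * m * (#|V|%:R - d) <= eta * \sum_(x | ~~ e x v) y x.
  rewrite out_count !mulr_sumr; apply: ler_sum => x _.
  by rewrite mulr1 ler_pM2l // v_min.
have deg_excess : 0 <= - m * (d - eta * #|V|%:R).
  by rewrite mulr_ge0 // ?subr_ge0 ?indeg_ge // oppr_ge0 ltW.
rewrite (bigID (fun x => e x v)) /=; lra.
Qed.

(* Junk value [0] when the system has no nonnegative solution. *)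
Definition matching_weights : V -> V -> R :=
  if farkas matching_col (fun=> 1) (enum_uniq _ : uniq edges)
    is inl (exist lam _) then fun u v => lam (u, v) else fun _ _ => 0.

Lemma matching_weights_perfect :
  perfect_weighted_fractional_matching e eta (1 - eta) matching_weights.
Proof.
rewrite /matching_weights; case: farkas => [[lam comb]|[y [y_edges y_neg]]].
  exact: perfect_of_conic_comb.
suff : 0 <= \sum_x y x.
  by move: y_neg; rewrite /dot; under eq_bigr do rewrite mulr1; lra.
apply: separating_sum_ge0 => u v euv.
by rewrite -[_ + _](dot_matching_col y (u, v)) y_edges // mem_enum.
Qed.

End FractionalMatching.

Lemma perfect_wfm_rmorph (R S : realFieldType) (f : {rmorphism R -> S})
    (V : finType) (e : rel V) (eta xi : R) (w : V -> V -> R) :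
  {homo f : x y / x <= y} ->
  perfect_weighted_fractional_matching e eta xi w ->
  perfect_weighted_fractional_matching e (f eta) (f xi) (fun u v => f (w u v)).
Proof.
move=> f_homo [[w_ge0 w_le1] w_total]; split; first split.
- by move=> u v euv; rewrite -(rmorph0 f) f_homo ?w_ge0.
- move=> u; rewrite -(rmorph1 f); apply: le_trans (f_homo _ _ (w_le1 u)).
  by rewrite rmorphD !rmorph_sum lerD // ler_sum // => v _; rewrite rmorphM.
- rewrite -(rmorph_nat f) -w_total /total_weight rmorph_sum.
  apply: eq_bigr => u _; rewrite rmorph_sum.
  by apply: eq_bigr => v _; rewrite rmorphM rmorphD.
Qed.

Section Relabel.
Variables (I V : finType) (phi : I -> V) (psi : V -> I).
Hypotheses (phiK : cancel phi psi) (psiK : cancel psi phi).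
Variables (eI : rel I) (e : rel V).
Hypothesis eIE : forall i j, eI i j = e (phi i) (phi j).

Lemma indeg_relabel i : indeg eI i = indeg e (phi i).
Proof.
rewrite /indeg -(card_imset _ (can_inj phiK)); apply: eq_card => v.
rewrite inE; apply/imsetP/idP => [[j]|evi].
  by rewrite inE /= eIE => ? ->.
by exists (psi v); rewrite ?psiK // inE /= eIE psiK.
Qed.

Lemma perfect_wfm_relabel (R : realFieldType) (eta xi : R) (w : I -> I -> R) :
  perfect_weighted_fractional_matching eI eta xi w ->
  perfect_weighted_fractional_matching e eta xi (fun u v => w (psi u) (psi v)).
Proof.
have phi_bij : bijective phi by exists psi.
have sum_out u (F : I -> R) :
    \sum_(v | e u v) F (psi v) = \sum_(j | eI (psi u) j) F j.
  rewrite (reindex phi (onW_bij _ phi_bij)).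
  by apply: eq_big => j; rewrite ?eIE ?phiK ?psiK.
have sum_in u (F : I -> R) :
    \sum_(v | e v u) F (psi v) = \sum_(j | eI j (psi u)) F j.
  rewrite (reindex phi (onW_bij _ phi_bij)).
  by apply: eq_big => j; rewrite ?eIE ?phiK ?psiK.
move=> [[w_ge0 w_le1] w_total]; split; first split.
- by move=> u v euv; apply: w_ge0; rewrite eIE !psiK.
- move=> u; rewrite (sum_out u (fun j => eta * w (psi u) j)).
  by rewrite (sum_in u (fun j => xi * w j (psi u))).
- rewrite -(bij_eq_card phi_bij) -w_total /total_weight.
  rewrite (reindex phi (onW_bij _ phi_bij)); apply: eq_bigr => i _.
  by rewrite (sum_out _ (fun j => (eta + xi) * w (psi (phi i)) j)) phiK.
Qed.

End Relabel.

Lemma ratr_nat_div (R : numFieldType) (m n : nat) :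
  ratr (m%:R / n%:R) = m%:R / n%:R :> R.
Proof. by rewrite fmorph_div /= !ratr_nat. Qed.

Definition common_den (I : finType) (w : I -> I -> rat) : nat :=
  (\prod_(ij : I * I) `|denq (w ij.1 ij.2)|)%N.

Lemma common_den_gt0 (I : finType) (w : I -> I -> rat) : (0 < common_den w)%N.
Proof. by apply: prodn_gt0 => ij; rewrite absz_gt0 denq_neq0. Qed.

Lemma denq_dvd_common_den (I : finType) (w : I -> I -> rat) i j :
  (`|denq (w i j)| %| common_den w)%N.
Proof. by rewrite /common_den (bigD1 (i, j)) //= dvdn_mulr. Qed.

Lemma ge0_rat_nat_div (x : rat) (D : nat) :
  0 <= x -> (0 < D)%N -> (`|denq x| %| D)%N -> exists k : nat, x = k%:R / D%:R.
Proof.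
move=> x_ge0 D_gt0 den_dvd; exists (`|numq x| * (D %/ `|denq x|))%N.
have den_gt0 : (0 < `|denq x|)%N by rewrite absz_gt0 denq_neq0.
rewrite natrM natr_div ?unitfE ?pnatr_eq0 -?lt0n //.
rewrite !natr_absz ger0_norm ?numq_ge0 // gtr0_norm ?denq_gt0 //.
rewrite -{1}(divq_num_den x); field.
by rewrite pnatr_eq0 -lt0n D_gt0 intr_eq0 denq_neq0.
Qed.

Definition den_bound (p q n : nat) : nat :=
  \max_(E : {set 'I_n * 'I_n})
    common_den (matching_weights (fun i j => (i, j) \in E) (p%:R / q%:R : rat)).

Lemma rational_perfect_wfm (R : realFieldType) (p q : nat) (V : finType)
    (e : rel V) :
  (0 < p)%N -> (0 < q)%N ->
  (forall u : V, (p%:R / q%:R : R) * #|V|%:R <= (indeg e u)%:R) ->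
  exists (w : V -> V -> R) (D : nat),
    perfect_weighted_fractional_matching e (p%:R / q%:R) (1 - p%:R / q%:R) w
    /\ (0 < D)%N /\ (D <= den_bound p q #|V|)%N
    /\ (forall u v, e u v -> exists k : nat, w u v = k%:R / D%:R).
Proof.
move=> p_gt0 q_gt0 indeg_ge.
pose phi := @enum_val V predT; pose psi := @enum_rank V.
have phiK : cancel phi psi := enum_valK.
have psiK : cancel psi phi := enum_rankK.
pose E := [set ij | e (phi ij.1) (phi ij.2)].
have EE i j : ((i, j) \in E) = e (phi i) (phi j) by rewrite inE.
pose eta : rat := p%:R / q%:R.
have ratr_eta : ratr eta = p%:R / q%:R :> R := ratr_nat_div R p q.
pose w := matching_weights (fun i j => (i, j) \in E) eta.
have w_perfect : perfect_weighted_fractional_matching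
    (fun i j => (i, j) \in E) eta (1 - eta) w.
  apply: matching_weights_perfect => [|i]; first by rewrite divr_gt0 ?ltr0n.
  rewrite card_ord (indeg_relabel phiK psiK EE) -(ler_rat R) rmorphM /=.
  by rewrite ratr_eta !ratr_nat indeg_ge.
exists (fun u v => ratr (w (psi u) (psi v))), (common_den w).
split; [|split; [exact: common_den_gt0|split; [exact: leq_bigmax|]]].
  have ratr_homo : {homo @ratr R : x y / x <= y} by move=> x y; rewrite ler_rat.
  have := perfect_wfm_relabel phiK psiK EE w_perfect.
  move/(perfect_wfm_rmorph ratr_homo).
  by rewrite rmorphB rmorph1 /= ratr_eta.
move=> u v euv.
have w_ge0 : 0 <= w (psi u) (psi v) by apply: w_perfect.1.1; rewrite EE !psiK.
have [k ->] :=
  ge0_rat_nat_div w_ge0 (common_den_gt0 w) (denq_dvd_common_den w _ _).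
by exists k; rewrite ratr_nat_div.
Qed.

Theorem lemma2p10 :
  (forall (R : realType) (eta : R) (V : finType) (e : rel V),
     0 < eta -> irreflexive e ->
     (forall u : V, eta * (#|V|)%:R <= (indeg e u)%:R) ->
     exists w : V -> V -> R,
       perfect_weighted_fractional_matching e eta (1 - eta) w) /\
  (exists f : nat -> nat -> nat -> nat,
     forall (R : realType) (p q : nat) (V : finType) (e : rel V),
       (0 < p)%N -> (0 < q)%N -> irreflexive e ->
       (forall u : V, (p%:R / q%:R : R) * (#|V|)%:R <= (indeg e u)%:R) ->
       exists (w : V -> V -> R) (D : nat),
         perfect_weighted_fractional_matching e (p%:R / q%:R) (1 - p%:R / q%:R) w
         /\ (0 < D)%N /\ (D <= f p q #|V|)%N
         /\ (forall u v, e u v -> exists k : nat, w u v = k%:R / D%:R)).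
Proof.
split=> [R eta V e eta_gt0 _ indeg_ge|].
  by exists (matching_weights e eta); apply: matching_weights_perfect.
by exists den_bound => R p q V e p_gt0 q_gt0 _; exact: rational_perfect_wfm.
Qed.
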